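(* Let $\mathbb S$ be the free semigroup action on the compact metric space $(X,d)$ generated by continuous maps $g_1,\dots,g_p$. For every $x\in X$, $$\sup_{\omega\in\Sigma_p^+}h_{D\times d}((\omega,x))\le h_d(x)+\log p.$$
   Context: Setting: $G_n^*$ the set of words $\underline g=g_{i_n}\cdots g_{i_1}$, $i_j\in\{1,\dots,p\}$; $d_{\underline g}(x,y)=\max_{0\le j\le n}d(g_{i_j}\cdots g_{i_1}x,g_{i_j}\cdots g_{i_1}y)$; $b_d(K,\underline g,\varepsilon)$ is the minimal cardinality of a $(\underline g,\varepsilon)$-spanning subset $F$ of $K$ (every $x\in K$ has $y\in F$ with $d_{\underline g}(x,y)<\varepsilon$). $B_d(K,\mathbb S,\varepsilon)=\limsup_n\frac1n\log\big(p^{-n}\sum_{\underline g\in G_n^*}b_d(K,\underline g,\varepsilon)\big)$, $h_d(x,\varepsilon)=\inf\{B_d(K,\mathbb S,\varepsilon):K\text{ compact neighbourhood of }x\}$, $h_d(x)=\lim_{\varepsilon\to0^+}h_d(x,\varepsilon)$. Skew product: $\Sigma_p^+=\{1,\dots,p\}^{\mathbb N}$ with metric $D(\omega,\omega')=p^{-\min\{n:\omega_n\ne\omega'_n\}}$, $\mathcal F_G(\omega,x)=(\sigma\omega,g_{\omega_1}(x))$, metric $D\times d=\max(D,d)$ on $\Sigma_p^+\times X$. For $V\subset\Sigma_p^+\times X$ let $B_{D\times d}(V,\mathcal F_G,\varepsilon)=\limsup_n\frac1n\log b_n(V,\varepsilon)$, where $b_n(V,\varepsilon)$ is the minimal cardinality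 of an $(n,\varepsilon)$-spanning set of $V$ for the Bowen metric of $\mathcal F_G$; $h_{D\times d}(z,\varepsilon)=\inf\{B_{D\times d}(V,\mathcal F_G,\varepsilon):V\text{ compact neighbourhood of }z\}$ and $h_{D\times d}(z)=\lim_{\varepsilon\to0^+}h_{D\times d}(z,\varepsilon)$ (the entropy function of $\mathcal F_G$). *)

From HB Require Import structures.
From mathcomp Require Import all_boot all_order all_algebra.
From mathcomp Require Import all_classical all_reals all_analysis.
Set Implicit Arguments. Unset Strict Implicit. Unset Printing Implicit Defensive.
Import Order.TTheory GRing.Theory Num.Theory.
Local Open Scope classical_set_scope.
Local Open Scope ring_scope.

Section FreeSemigroupEntropy.
Context {R : realType}.

(* A word g_{i_n} ... g_{i_1} is represented by the list [:: i_1; ...; i_n]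
   (i_1 is applied first).  word_orbit g (take j w) x = g_{i_j}...g_{i_1} x. *)
Definition word_orbit (X : Type) (p : nat) (g : 'I_p -> X -> X)
    (w : seq 'I_p) (x : X) : X :=
  foldl (fun y i => g i y) x w.

Definition dword (X : metricType R) (p : nat) (g : 'I_p -> X -> X)
    (w : seq 'I_p) (x y : X) : R :=
  \big[Num.max/0]_(j < (size w).+1)
     mdist (word_orbit g (take j w) x) (word_orbit g (take j w) y).

Definition word_spanning (X : metricType R) (p : nat) (g : 'I_p -> X -> X)
    (K : set X) (w : seq 'I_p) (eps : R) (F : seq X) : Prop :=
  (forall y, y \in F -> K y) /\
  (forall x, K x -> exists y, y \in F /\ dword g w x y < eps).

Definition b_d (X : metricType R) (p : nat) (g : 'I_p -> X -> X)
    (K : set X) (w : seq 'I_p) (eps : R) : R :=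
  inf [set (size F)%:R | F in word_spanning g K w eps].

Definition B_d (X : metricType R) (p : nat) (g : 'I_p -> X -> X)
    (K : set X) (eps : R) : \bar R :=
  limn_esup (fun n : nat =>
    ((n%:R)^-1 * ln ((p%:R ^- n) *
        \sum_(w : n.-tuple 'I_p) b_d g K (tval w) eps))%:E).

Definition h_d_eps (X : metricType R) (p : nat) (g : 'I_p -> X -> X)
    (x : X) (eps : R) : \bar R :=
  ereal_inf [set B_d g K eps | K in [set K : set X | compact K /\ nbhs x K]].

Definition h_d (X : metricType R) (p : nat) (g : 'I_p -> X -> X)
    (x : X) : \bar R :=
  lim (h_d_eps g x eps @[eps --> 0^'+]).

Definition dball (T : Type) (dist : T -> T -> R) (z : T) (e : R) : set T :=
  [set y | dist z y < e].

Definition dopen (T : Type) (dist : T -> T -> R) (U : set T) : Prop :=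
  forall z, U z -> exists2 e, 0 < e & dball dist z e `<=` U.

Definition dcompact (T : Type) (dist : T -> T -> R) (K : set T) : Prop :=
  forall C : set (set T), (forall U, C U -> dopen dist U) ->
    K `<=` \bigcup_(U in C) U ->
    exists s : seq (set T), (forall U, U \in s -> C U) /\
      K `<=` \bigcup_(U in [set U | U \in s]) U.

Definition dnbhs (T : Type) (dist : T -> T -> R) (z : T) (V : set T) : Prop :=
  exists2 e, 0 < e & dball dist z e `<=` V.

(* Sigma_p^+ = {1..p}^N, omega = (omega_1, omega_2, ...) stored as
   omega 0 = omega_1, omega 1 = omega_2, ... *)
Definition Sigma (p : nat) := nat -> 'I_p.

(* D(omega, omega') = p^{- min{n : omega_n <> omega'_n}} (1-based index),
   and 0 when omega = omega'. *)
Definition Dseq (p : nat) (w w' : Sigma p) : R :=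
  match pselect (exists n, w n != w' n) with
  | left h => p%:R ^- (@ex_minn (fun n => w n != w' n) h).+1
  | right _ => 0
  end.

Definition skew_dist (X : metricType R) (p : nat)
    (z z' : Sigma p * X) : R :=
  Num.max (Dseq z.1 z'.1) (mdist z.2 z'.2).

Definition FG (X : Type) (p : nat) (g : 'I_p -> X -> X)
    (z : Sigma p * X) : Sigma p * X :=
  (fun n => z.1 n.+1, g (z.1 0%N) z.2).

Definition bowen (X : metricType R) (p : nat) (g : 'I_p -> X -> X)
    (n : nat) (z z' : Sigma p * X) : R :=
  \big[Num.max/0]_(j < n) skew_dist (iter j (FG g) z) (iter j (FG g) z').

Definition bowen_spanning (X : metricType R) (p : nat) (g : 'I_p -> X -> X)
    (V : set (Sigma p * X)) (n : nat) (eps : R) (F : seq (Sigma p * X)) :=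
  (forall z, z \in F -> V z) /\
  (forall z, V z -> exists z', z' \in F /\ bowen g n z z' < eps).

Definition b_n (X : metricType R) (p : nat) (g : 'I_p -> X -> X)
    (V : set (Sigma p * X)) (n : nat) (eps : R) : R :=
  inf [set (size F)%:R | F in bowen_spanning g V n eps].

Definition B_skew (X : metricType R) (p : nat) (g : 'I_p -> X -> X)
    (V : set (Sigma p * X)) (eps : R) : \bar R :=
  limn_esup (fun n : nat => ((n%:R)^-1 * ln (b_n g V n eps))%:E).

Definition h_skew_eps (X : metricType R) (p : nat) (g : 'I_p -> X -> X)
    (z : Sigma p * X) (eps : R) : \bar R :=
  ereal_inf [set B_skew g V eps |
    V in [set V | dcompact (@skew_dist X p) V /\ dnbhs (@skew_dist X p) z V]].

Definition h_skew (X : metricType R) (p : nat) (g : 'I_p -> X -> X)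
    (z : Sigma p * X) : \bar R :=
  lim (h_skew_eps g z eps @[eps --> 0^'+]).

End FreeSemigroupEntropy.

(* Fix eps > 0 and a compact neighbourhood K of x; then Sigma_p x K is a compact
   neighbourhood of (omega, x) for D x d, the compactness coming from a
   Koenig-type argument on cylinders. Choose k such that sequences sharing their
   first k letters are eps-close for D. A point (a, y) is eps-shadowed for n steps
   of F_G by (a', y') as soon as a' shares the first n + k letters of a and y' is
   eps-close to y for d_w, where w = a_1 ... a_n; hence
     b_n(Sigma_p x K, eps) <= p^k * sum_{|w| = n} b_d(K, w, eps).
   Taking (1/n) log and limsup gives
     B_{D x d}(Sigma_p x K, eps) <= B_d(K, eps) + log p,
   and one concludes by taking infima over K and letting eps -> 0, both entropy
   functions being monotone in eps. *)

From Pilot Require Import Defs.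
From HB Require Import structures.
From mathcomp Require Import all_boot all_order all_algebra.
From mathcomp Require Import all_classical all_reals all_analysis.
From mathcomp Require Import zify.
Import Order.TTheory GRing.Theory Num.Theory metricType_numDomainType.
Set Implicit Arguments. Unset Strict Implicit. Unset Printing Implicit Defensive.
Local Open Scope classical_set_scope.
Local Open Scope ring_scope.

(* [b_d] and [b_n] are, by definition, [min_card] of the spanning predicates. *)
Section MinimalCardinality.
Context {R : realType} {T : Type}.
Implicit Types P Q : set (seq T).

Definition min_card P : R := inf [set (size F)%:R | F in P].

Lemma min_card_le P F : P F -> min_card P <= (size F)%:R.
Proof.
move=> PF; apply: ge_inf; last by exists F.
by exists 0 => _ [G _ <-]; rewrite ler0n.
Qed.

Lemma min_card_attained P :
  (exists F, P F) -> exists2 F, P F & min_card P = (size F)%:R.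
Proof.
move=> [F0 PF0].
have [|m /asboolP[F PF <-] Fmin] := ex_minnP (P := fun m => `[< exists2 F, P F & size F = m >]).
  by exists (size F0); apply/asboolP; exists F0.
exists F => //; apply/eqP; rewrite eq_le min_card_le //=.
apply: lb_le_inf; first by exists (size F)%:R, F.
by move=> _ [G PG <-]; rewrite ler_nat Fmin //; apply/asboolP; exists G.
Qed.

Lemma min_card_ge1 P :
  (exists F, P F) -> (forall F, P F -> (0 < size F)%N) -> 1 <= min_card P.
Proof. by move=> /min_card_attained[F PF ->] /(_ F PF); rewrite ler1n. Qed.

Lemma le_min_card P Q : (exists F, P F) -> P `<=` Q -> min_card Q <= min_card P.
Proof. by move=> /min_card_attained[F PF ->] PQ; exact/min_card_le/PQ. Qed.

End MinimalCardinality.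

Lemma compact_nbhs_cover (X : topologicalType) (K : set X) (U : X -> set X) :
  compact K -> (forall y, K y -> nbhs y (U y)) ->
  exists s : seq X, (forall y, y \in s -> K y) /\
    forall z, K z -> exists2 y, y \in s & U y z.
Proof.
move=> /compact_near_coveringP cK UK.
pose F (A : set (seq X)) := exists s0 : seq X, forall s, {subset s0 <= s} -> A s.
have F_filter : Filter F.
  split; first by exists [::].
    move=> A B [s1 As1] [s2 Bs2]; exists (s1 ++ s2) => s sub.
    by split; [apply: As1 | apply: Bs2] => y ys; apply: sub; rewrite mem_cat ys ?orbT.
  by move=> A B AB [s0 As0]; exists s0 => s /As0 /AB.
have [|s0 cov] := cK _ F (fun s z => exists2 y, (y \in s) && `[< K y >] & U y z) F_filter.
  move=> y Ky; exists (U y, [set s | y \in s]); first split.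
  - exact: UK.
  - by exists [:: y] => s /(_ y); rewrite mem_seq1 eqxx => /(_ isT).
  - by case=> z s /= [Uz ys]; exists y => //; rewrite ys; apply/asboolP.
exists [seq y <- s0 | `[< K y >]]; split => [y|z Kz].
  by rewrite mem_filter => /andP[/asboolP].
have [y /andP[ys Ky] Uyz] := cov s0 (fun _ => id) z Kz.
by exists y => //; rewrite mem_filter Ky.
Qed.

Section EntropyLimits.
Context {R : realType}.
Local Open Scope ereal_scope.

Lemma nonincreasing_at_right0_limE (f : R -> \bar R) :
  (forall a b : R, (0 < a)%R -> (a <= b)%R -> f b <= f a) ->
  lim (f e @[e --> (0 : R)^'+]) = ereal_sup [set f e | e in `]0%R, +oo[%classic].
Proof.
move=> f_antitone; apply: (cvg_lim (@ereal_hausdorff R)).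
apply: nonincreasing_at_right_cvge => // a b.
by rewrite !in_itv /= !andbT => a0 _; exact: f_antitone.
Qed.

Lemma le_ereal_inf_image (I : Type) (S : set I) (f f' : I -> \bar R) :
  (forall i, S i -> f i <= f' i) -> ereal_inf (f @` S) <= ereal_inf (f' @` S).
Proof.
move=> ff'; apply: le_ereal_inf_tmp => _ [i Si <-].
by apply: le_trans (ff' i Si); apply: ereal_inf_lbound; exists i.
Qed.

Lemma le_limn_esupD (u v : (\bar R)^nat) (c : R) :
  (\forall n \near \oo, u n <= v n + c%:E) ->
  limn_esup u <= limn_esup v + c%:E.
Proof.
move=> [N _ uvN]; rewrite /limn_esup /limf_esup -leeBlDr //.
apply: le_ereal_inf_tmp => _ [A FA <-]; rewrite leeBlDr //.
have FAN : \oo (A `&` [set n | (N <= n)%N]) by apply: filterI => //; exists N.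
apply: le_trans (_ : ereal_sup (u @` (A `&` [set n | (N <= n)%N])) <= _).
  by apply: ereal_inf_lbound; exists (A `&` [set n | (N <= n)%N]).
apply: ge_ereal_sup => _ [n [An Nn] <-]; apply: le_trans (uvN n Nn) _.
by rewrite leeD2r //; apply: ereal_sup_ubound; exists n.
Qed.

Lemma le_limn_esup_ln (a b : nat -> R) :
  (forall n, 0 < a n)%R -> (forall n, a n <= b n)%R ->
  limn_esup (fun n => (n%:R^-1 * ln (a n))%:E) <=
  limn_esup (fun n => (n%:R^-1 * ln (b n))%:E).
Proof.
move=> a_gt0 ab; rewrite -[leRHS]adde0; apply: le_limn_esupD.
apply: nearW => n; rewrite adde0 lee_fin ler_wpM2l ?invr_ge0 //.
by rewrite ler_ln ?posrE ?(lt_le_trans (a_gt0 n)).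
Qed.

End EntropyLimits.

Section WordSpanning.
Context {R : realType} {p : nat} {X : metricType R} (g : 'I_p -> X -> X).
Hypothesis g_cont : forall i, continuous (g i).

Lemma word_orbit_rcons w i x :
  word_orbit g (rcons w i) x = g i (word_orbit g w x).
Proof. by rewrite /word_orbit foldl_rcons. Qed.

Lemma word_orbit_continuous w : continuous (word_orbit g w).
Proof.
elim/last_ind: w => [|w i IHw] x; first exact: cvg_id.
have -> : word_orbit g (rcons w i) = g i \o word_orbit g w.
  by apply: funext => y; rewrite word_orbit_rcons.
by apply: continuous_comp; [exact: IHw | exact: g_cont].
Qed.

Lemma dword_nbhs w y (e : R) : 0 < e -> nbhs y [set x | dword g w x y < e].
Proof.
move=> e_gt0; apply: filterS (filter_forall _ (fun j : 'I_(size w).+1 =>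
  cvgr_dist_lt (@word_orbit_continuous (take j w) y) e_gt0)) => x xy.
by apply: bigmax_lt => // j _; rewrite metric_sym.
Qed.

Lemma word_spanning_exists (K : set X) w (e : R) : compact K -> 0 < e ->
  exists F, word_spanning g K w e F.
Proof.
move=> cK e_gt0; have [s [sK cov]] := compact_nbhs_cover cK
  (fun y _ => dword_nbhs w y e_gt0).
by exists s; split => // x /cov[y sy xy]; exists y.
Qed.

Lemma b_d_ge1 (K : set X) w e x : compact K -> 0 < e -> K x -> 1 <= b_d g K w e.
Proof.
move=> cK e_gt0 Kx; apply: min_card_ge1; first exact: word_spanning_exists.
by move=> F [_ /(_ x Kx)[y []]]; case: F.
Qed.

Lemma b_d_nonincreasing (K : set X) w e1 e2 : compact K -> 0 < e1 -> e1 <= e2 ->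
  b_d g K w e2 <= b_d g K w e1.
Proof.
move=> cK e1_gt0 e12; apply: le_min_card; first exact: word_spanning_exists.
move=> F [FK spanF]; split => // x /spanF[y [yF xy]].
by exists y; split => //; apply: lt_le_trans e12.
Qed.

Hypothesis p_gt0 : (0 < p)%N.

Lemma sum_b_d_gt0 (K : set X) x e n : compact K -> 0 < e -> K x ->
  0 < \sum_(w : n.-tuple 'I_p) b_d g K w e.
Proof.
move=> cK e_gt0 Kx; apply: lt_le_trans (_ : \sum_(w : n.-tuple 'I_p) (1 : R) <= _).
  by rewrite sumr_const card_tuple card_ord ltr0n expn_gt0 p_gt0.
by apply: ler_sum => w _; exact: b_d_ge1 Kx.
Qed.

Lemma h_dE x : h_d g x = ereal_sup [set h_d_eps g x e | e in `]0, +oo[%classic].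
Proof.
apply: nonincreasing_at_right0_limE => e1 e2 e1_gt0 e12.
apply: le_ereal_inf_image => K [cK /nbhs_singleton Kx].
apply: le_limn_esup_ln => n.
  rewrite mulr_gt0 ?invr_gt0 ?exprn_gt0 ?ltr0n //.
  exact: sum_b_d_gt0 cK (lt_le_trans e1_gt0 e12) Kx.
rewrite ler_pM2l ?invr_gt0 ?exprn_gt0 ?ltr0n //.
by apply: ler_sum => w _; exact: b_d_nonincreasing.
Qed.

End WordSpanning.

Lemma mkseq_eqP (T : Type) (a b : nat -> T) k :
  mkseq a k = mkseq b k <-> forall i, (i < k)%N -> a i = b i.
Proof.
split=> [ab i ik|ab]; last by apply/eq_in_map => i; rewrite mem_iota => /andP[_ /ab].
by have := congr1 (nth (a 0%N) ^~ i) ab; rewrite /= !nth_mkseq.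
Qed.

Lemma take_mkseq (T : Type) (f : nat -> T) j n : (j <= n)%N ->
  take j (mkseq f n) = mkseq f j.
Proof. by move=> jn; rewrite /mkseq -map_take take_iota (minn_idPl jn). Qed.

Lemma mkseqD (T : Type) (f : nat -> T) m n :
  mkseq f (m + n) = mkseq f m ++ mkseq (fun i => f (m + i)%N) n.
Proof.
rewrite /mkseq iotaD map_cat add0n; congr (_ ++ _).
by rewrite -[in iota m n](addn0 m) iotaDl -map_comp.
Qed.

(* If [P [::]] failed, dependent choice would extend a bad word letter by letter
   into a sequence none of whose prefixes satisfies [P]. *)
Lemma fan_principle (T : Type) (P : set (seq T)) :
  (forall u, (forall a, P (rcons u a)) -> P u) ->
  (forall w : nat -> T, exists k, P (mkseq w k)) -> P [::].
Proof.
move=> P_rcons P_branch; apply: contrapT => notP0.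
have [a0 _] : exists a, ~ P [:: a].
  by apply/existsNP => P1; apply/notP0/P_rcons.
have /choice[next nextP] : forall u, exists a, ~ P u -> ~ P (rcons u a).
  move=> u; have [[a nPua]|/forallNP allP] := pselect (exists a, ~ P (rcons u a)).
    by exists a.
  by exists a0 => nPu; exfalso; apply/nPu/P_rcons => a; exact: contrapT (allP a).
pose branch k := iter k (fun u => rcons u (next u)) [::].
have branch_bad k : ~ P (branch k) by elim: k => //= k; exact: nextP.
have branchE k : mkseq (next \o branch) k = branch k.
  by elim: k => // k IHk; rewrite mkseqS IHk.
by have [k] := P_branch (next \o branch); rewrite branchE; exact: branch_bad.
Qed.

Section DistanceCover.
Context {R : realType} {T : eqType} (dist : T -> T -> R).
Hypothesis dist_xx : forall z, dist z z = 0.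
Hypothesis dist_triangle : forall x y z, dist x z <= dist x y + dist y z.

(* Unqualified, [dnbhs] is the library's deleted neighbourhood filter. *)
Definition dinterior (U : set T) : set T := [set z | Defs.dnbhs dist z U].

Lemma dopen_dinterior U : dopen dist (dinterior U).
Proof.
move=> z [e e_gt0 zU]; exists e => // w zw.
exists (e - dist z w); first by rewrite subr_gt0.
move=> v wv; apply: zU; apply: le_lt_trans (dist_triangle z w v) _.
by rewrite -ltrBrDl.
Qed.

Lemma dinterior_subset U : dinterior U `<=` U.
Proof. by move=> z [e e_gt0]; apply; rewrite /dball /= dist_xx. Qed.

Lemma dcompact_dnbhs_cover (K : set T) (U : T -> set T) :
  dcompact dist K -> (forall z, K z -> Defs.dnbhs dist z (U z)) ->
  exists s : seq T, (forall y, y \in s -> K y) /\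
    forall z, K z -> exists2 y, y \in s & U y z.
Proof.
move=> cK UK; have [[z0 Kz0]|K0] := pselect (exists z, K z); last first.
  by exists [::]; split => // z Kz; exfalso; apply: K0; exists z.
pose C := [set dinterior (U z) | z in K].
have /choice[center centerP] :
    forall V, exists z, C V -> K z /\ V = dinterior (U z).
  move=> V; have [[z Kz <-]|nCV] := pselect (C V); first by exists z.
  by exists z0 => /nCV.
have C_open V : C V -> dopen dist V by move=> [z _ <-]; exact: dopen_dinterior.
have C_cover : K `<=` \bigcup_(V in C) V.
  by move=> z Kz; exists (dinterior (U z)); [exists z | exact: UK].
have [s [sC cover]] := cK C C_open C_cover.
exists (map center s); split => [_ /mapP[V /sC/centerP[Kc _] ->] //|z /cover[V sV Vz]].
have [_ VE] := centerP V (sC V sV).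
by exists (center V); [exact: map_f | rewrite VE in Vz; exact: dinterior_subset].
Qed.

End DistanceCover.

Section ShiftMetric.
Context {R : realType} {p : nat}.
Hypothesis p_gt0 : (0 < p)%N.
Local Notation D := (@Dseq R p).

Lemma Dseq_first_diff (a b : Sigma p) :
  (D a b = 0 /\ a = b) \/
  exists m, [/\ a m != b m, mkseq a m = mkseq b m & D a b = p%:R ^- m.+1].
Proof.
rewrite /Dseq; case: pselect => [abm|ab]; last first.
  left; split=> //; apply/funext => n.
  by have [//|abn] := eqVneq (a n) (b n); exfalso; apply: ab; exists n.
right; case: ex_minnP => m abm' m_min; exists m; split=> //; apply/mkseq_eqP => i im.
by have [//|/m_min] := eqVneq (a i) (b i); rewrite leqNgt im.
Qed.

Lemma Dseq_ge (a b : Sigma p) i m : a i != b i -> (i <= m)%N ->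
  p%:R ^- m.+1 <= D a b.
Proof.
move=> abi im; rewrite /Dseq; case: pselect => [h|[]]; last by exists i.
case: ex_minnP => k _ /(_ i abi) ki.
rewrite lef_pV2 ?posrE ?exprn_gt0 ?ltr0n // ler_weXn2l ?ler1n //.
by rewrite ltnS (leq_trans ki).
Qed.

Lemma Dseq_ge0 (a b : Sigma p) : 0 <= D a b.
Proof.
by have [[-> _]|[m [_ _ ->]]] := Dseq_first_diff a b; rewrite ?invr_ge0 ?exprn_ge0 ?ler0n.
Qed.

Lemma Dseq_xx (a : Sigma p) : D a a = 0.
Proof. by have [[]|[m [/eqP]]] := Dseq_first_diff a a. Qed.

Lemma Dseq_sym (a b : Sigma p) : D a b = D b a.
Proof.
have [[-> ->]|[m [abm ab ->]]] := Dseq_first_diff a b; first by rewrite Dseq_xx.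
have [[_ ba]|[m' [bam' ba ->]]] := Dseq_first_diff b a; first by rewrite ba eqxx in abm.
suff -> : m' = m by [].
case: (ltngtP m m') => [lt|lt|->] //.
  by move/mkseq_eqP/(_ m lt): ba abm => ->; rewrite eqxx.
by move/mkseq_eqP/(_ m' lt): ab bam' => ->; rewrite eqxx.
Qed.

Lemma Dseq_ultra (a b c : Sigma p) : D a c <= Num.max (D a b) (D b c).
Proof.
have [[-> _]|[m [acm _ ->]]] := Dseq_first_diff a c; first by rewrite le_max Dseq_ge0.
have [abm|abm] := eqVneq (a m) (b m); rewrite le_max.
  by rewrite (@Dseq_ge b c m) ?orbT // -abm.
by rewrite (Dseq_ge abm).
Qed.

Lemma Dseq_lt_agree (e : R) : 0 < e -> exists k, forall a b : Sigma p,
  mkseq a k = mkseq b k -> D a b < e.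
Proof.
move=> e_gt0; have [p1|p_gt1] := leqP p 1.
  exists 0%N => a b _; have [[-> _] //|[m [abm _ _]]] := Dseq_first_diff a b.
  suff /eqP : a m = b m by rewrite (negPf abm).
  by apply: val_inj => /=; have := ltn_ord (a m); have := ltn_ord (b m); lia.
exists (Num.truncn e^-1) => a b ab.
have [[-> _] //|[m [abm abm' ->]]] := Dseq_first_diff a b.
have km : (Num.truncn e^-1 <= m)%N.
  rewrite leqNgt; apply/negP => mk.
  by move/mkseq_eqP/(_ m mk): ab abm => ->; rewrite eqxx.
rewrite -[e]invrK ltf_pV2 ?posrE ?invr_gt0 ?exprn_gt0 ?ltr0n //.
apply: lt_le_trans (truncnS_gt _) _.
by rewrite -natrX ler_nat (leq_trans _ (ltnW (ltn_expl _ p_gt1))).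
Qed.

Lemma Dseq_head (a b : Sigma p) : D a b < p%:R^-1 -> a 0%N = b 0%N.
Proof.
apply: contraPeq => ab; apply/negP; rewrite -leNgt.
by have := Dseq_ge ab (leqnn 0); rewrite expr1.
Qed.

Lemma Dseq_shift (a b : Sigma p) : a 0%N = b 0%N ->
  D (fun n => a n.+1) (fun n => b n.+1) <= p%:R * D a b.
Proof.
move=> ab0.
have [[-> _]|[m [abm _ ->]]] := Dseq_first_diff (fun n => a n.+1) (fun n => b n.+1).
  by rewrite mulr_ge0 ?ler0n ?Dseq_ge0.
apply: le_trans (ler_wpM2l (ler0n _ _) (Dseq_ge abm (leqnn m.+1))).
by rewrite [in leRHS]exprS invfM mulrA divff ?mul1r // pnatr_eq0 -lt0n.
Qed.

End ShiftMetric.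

Section SkewProduct.
Context {R : realType} {p : nat} {X : metricType R}.
Hypothesis p_gt0 : (0 < p)%N.
Local Notation skew := (@skew_dist R X p).

Lemma skew_ge0 z z' : 0 <= skew z z'.
Proof. by rewrite /skew_dist le_max Dseq_ge0. Qed.

Lemma skew_sym z z' : skew z z' = skew z' z.
Proof. by rewrite /skew_dist Dseq_sym metric_sym. Qed.

Lemma skew_xx z : skew z z = 0.
Proof. by rewrite /skew_dist Dseq_xx mdistxx maxxx. Qed.

Lemma skew_ltP z z' e :
  skew z z' < e <-> Dseq z.1 z'.1 < e /\ mdist z.2 z'.2 < e.
Proof. by rewrite /skew_dist gt_max; split => [/andP|[-> ->]]. Qed.

Lemma skew_triangle z1 z2 z3 : skew z1 z3 <= skew z1 z2 + skew z2 z3.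
Proof.
rewrite {1}/skew_dist ge_max; apply/andP; split.
  apply: le_trans (Dseq_ultra p_gt0 _ z2.1 _) _; rewrite ge_max.
  by rewrite ler_wpDr ?ler_wpDl ?skew_ge0 // le_max lexx.
by apply: le_trans (metric_triangle _ z2.2 _) _; apply: lerD; rewrite le_max lexx orbT.
Qed.

Variable g : 'I_p -> X -> X.
Hypothesis g_cont : forall i, continuous (g i).

Lemma FG_continuous z (e : R) : 0 < e -> exists2 d, 0 < d &
  forall z', skew z z' < d -> skew (FG g z) (FG g z') < e.
Proof.
case: z => a x e_gt0.
have [d1 /= d1_gt0 gx] :=
  iffLR (nbhs_mdistP _ _) (cvgr_dist_lt (@g_cont (a 0%N) x) e_gt0).
exists (Num.min (Num.min d1 p%:R^-1) (e / p%:R)).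
  by rewrite !lt_min d1_gt0 invr_gt0 divr_gt0 ?ltr0n ?p_gt0.
case=> b y /skew_ltP[/=]; rewrite !lt_min => /andP[/andP[_ /(Dseq_head p_gt0) ab0] Dab].
move=> /andP[/andP[xy _] _]; apply/skew_ltP; split => /=.
  by apply: le_lt_trans (Dseq_shift p_gt0 ab0) _; rewrite -ltr_pdivlMl ?ltr0n // mulrC.
by rewrite -ab0; apply: gx.
Qed.

Lemma iter_FG_continuous j z (e : R) : 0 < e -> exists2 d, 0 < d &
  forall z', skew z z' < d -> skew (iter j (FG g) z) (iter j (FG g) z') < e.
Proof.
elim: j e => [|j IHj] e e_gt0; first by exists e.
have [d1 d1_gt0 FGd1] := FG_continuous (iter j (FG g) z) e_gt0.
have [d d_gt0 iterd] := IHj d1 d1_gt0.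
by exists d => // z' /iterd /FGd1.
Qed.

Lemma bowen_dnbhs n z (e : R) : 0 < e ->
  Defs.dnbhs skew z [set z' | bowen g n z' z < e].
Proof.
move=> e_gt0.
suff [d d_gt0 dj] : exists2 d, 0 < d & forall z', skew z z' < d ->
    forall j, (j < n)%N -> skew (iter j (FG g) z') (iter j (FG g) z) < e.
  by exists d => // z' /dj zz'; apply: bigmax_lt => // j _; exact: zz'.
elim: n => [|n [d1 d1_gt0 d1j]]; first by exists 1.
have [d2 d2_gt0 d2n] := iter_FG_continuous n z e_gt0.
exists (Num.min d1 d2); first by rewrite lt_min d1_gt0 d2_gt0.
move=> z'; rewrite lt_min => /andP[zd1 zd2] j; rewrite ltnS leq_eqVlt.
by case/orP => [/eqP -> | jn]; [rewrite skew_sym; exact: d2n | exact: d1j].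
Qed.

Lemma bowen_spanning_exists (V : set (Sigma p * X)) n (e : R) :
  dcompact skew V -> 0 < e -> exists F, bowen_spanning g V n e F.
Proof.
move=> cV e_gt0; have [s [sV cover]] := dcompact_dnbhs_cover skew_xx skew_triangle cV
  (fun z _ => bowen_dnbhs n z e_gt0).
by exists s; split => // z /cover[z' sz' zz']; exists z'.
Qed.

Lemma b_n_ge1 V n e z : dcompact skew V -> 0 < e -> V z -> 1 <= b_n g V n e.
Proof.
move=> cV e_gt0 Vz; apply: min_card_ge1; first exact: bowen_spanning_exists.
by move=> F [_ /(_ z Vz)[y []]]; case: F.
Qed.

Lemma b_n_nonincreasing V n e1 e2 : dcompact skew V -> 0 < e1 -> e1 <= e2 ->
  b_n g V n e2 <= b_n g V n e1.
Proof.
move=> cV e1_gt0 e12; apply: le_min_card; first exact: bowen_spanning_exists.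
move=> F [FV spanF]; split => // z /spanF[z' [z'F zz']].
by exists z'; split => //; apply: lt_le_trans e12.
Qed.

Lemma h_skewE z :
  h_skew g z = ereal_sup [set h_skew_eps g z e | e in `]0, +oo[%classic].
Proof.
apply: nonincreasing_at_right0_limE => e1 e2 e1_gt0 e12.
apply: le_ereal_inf_image => V [cV /(dinterior_subset skew_xx) Vz].
apply: le_limn_esup_ln => n; last exact: b_n_nonincreasing.
by apply: lt_le_trans (b_n_ge1 _ cV (lt_le_trans e1_gt0 e12) Vz).
Qed.

End SkewProduct.

Definition finite_subcover (T : Type) (C : set (set T)) (A : set T) : Prop :=
  exists s : seq (set T), (forall U, U \in s -> C U) /\
    A `<=` \bigcup_(U in [set U | U \in s]) U.

Definition cylinder (p : nat) (u : seq 'I_p) : set (Sigma p) :=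
  [set a | mkseq a (size u) = u].

Section CylinderCompactness.
Context {R : realType} {p : nat} {X : metricType R}.
Hypothesis p_gt0 : (0 < p)%N.
Local Notation skew := (@skew_dist R X p).

Lemma finite_subcover_cylinder_rcons (C : set (set (Sigma p * X))) (K : set X) u :
  (forall a, finite_subcover C (cylinder (rcons u a) `*` K)) ->
  finite_subcover C (cylinder u `*` K).
Proof.
move=> /choice[s sP]; exists (flatten [seq s a | a <- enum 'I_p]); split.
  by move=> U /flatten_mapP[a _ /(proj1 (sP a))].
move=> [b y] [/= bu Ky]; have [|U Uba Uby] := proj2 (sP (b (size u))) (b, y).
  by split => //; rewrite /cylinder /= size_rcons mkseqS bu.
by exists U => //; apply/flatten_mapP; exists (b (size u)); rewrite ?mem_enum.
Qed.

Section PrefixCover.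
Variables (K : set X) (C : set (set (Sigma p * X))).
Hypothesis cK : compact K.
Hypothesis C_open : forall U, C U -> dopen skew U.
Hypothesis C_cover : setT `*` K `<=` \bigcup_(U in C) U.

Lemma cover_contains_cylinder_ball (w : Sigma p) y :
  exists Uek : set (Sigma p * X) * R * nat, K y ->
  [/\ C Uek.1.1, 0 < Uek.1.2 & forall a y',
     mkseq w Uek.2 = mkseq a Uek.2 -> mdist y y' < Uek.1.2 -> Uek.1.1 (a, y')].
Proof.
have [Ky|nKy] := pselect (K y); last by exists (set0, 0, 0%N) => /nKy.
have [U CU Uwy] := @C_cover (w, y) (conj I Ky).
have [e e_gt0 eU] := C_open CU Uwy.
have [k Dk] := Dseq_lt_agree p_gt0 e_gt0.
by exists (U, e, k) => _; split => // a y' wa yy'; apply/eU/skew_ltP; split; [exact: Dk|].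
Qed.

Lemma finite_subcover_cylinder_prefix (w : Sigma p) :
  exists k, finite_subcover C (cylinder (mkseq w k) `*` K).
Proof.
have /choice[Uek Uek_spec] := cover_contains_cylinder_ball w.
have Uek_nbhs y : K y -> nbhs y [set y' | mdist y y' < (Uek y).1.2].
  by move=> /Uek_spec[_ e_gt0 _]; apply/nbhs_mdistP; exists (Uek y).1.2.
have [t [tK cover]] := compact_nbhs_cover cK Uek_nbhs.
exists (\max_(y <- t) (Uek y).2), [seq (Uek y).1.1 | y <- t]; split.
  by move=> _ /mapP[y /tK /Uek_spec[CU _ _] ->].
move=> [a y'] [/=]; rewrite /cylinder size_mkseq => /esym wa Ky'.
have [y yt yy'] := cover y' Ky'.
have [_ _ Uay'] := Uek_spec y (tK y yt).
exists (Uek y).1.1; first exact: map_f.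
have kmax : ((Uek y).2 <= \max_(y <- t) (Uek y).2)%N by exact: leq_bigmax_seq.
by apply: Uay' yy'; rewrite -!(take_mkseq _ kmax) wa.
Qed.

End PrefixCover.

Lemma dcompact_setTX (K : set X) : compact K -> dcompact skew (setT `*` K).
Proof.
move=> cK C C_open C_cover.
have [s [sC cover]] : finite_subcover C (cylinder [::] `*` K).
  apply: (@fan_principle _ (fun u => finite_subcover C (cylinder u `*` K))) => [u|w].
    exact: finite_subcover_cylinder_rcons.
  exact: finite_subcover_cylinder_prefix.
by exists s; split => // z [_ Kz]; apply: cover.
Qed.

Lemma dnbhs_setTX (K : set X) z : nbhs z.2 K -> Defs.dnbhs skew z (setT `*` K).
Proof. by case/nbhs_mdistP => e /= e_gt0 eK; exists e => // z' /skew_ltP[_ /eK]. Qed.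

End CylinderCompactness.

Section Counting.
Context {R : realType} {p : nat} {X : metricType R} (g : 'I_p -> X -> X).
Hypothesis p_gt0 : (0 < p)%N.
Hypothesis g_cont : forall i, continuous (g i).

Lemma iter_FG j (a : Sigma p) x :
  iter j (FG g) (a, x) = (fun i => a (j + i)%N, word_orbit g (mkseq a j) x).
Proof.
elim: j => [|j IHj]; first by congr pair; apply: funext => i.
rewrite iterS IHj /FG mkseqS word_orbit_rcons /= addn0; congr pair.
by apply: funext => i /=; rewrite addnS addSn.
Qed.

Lemma bowen_lt_prefix (a b : Sigma p) x y n k (e : R) :
  (forall a b : Sigma p, mkseq a k = mkseq b k -> Dseq a b < e) -> 0 < e ->
  mkseq a (n + k) = mkseq b (n + k) -> dword g (mkseq a n) x y < e ->
  bowen g n (a, x) (b, y) < e.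
Proof.
move=> Dk e_gt0 /mkseq_eqP ab dxy; apply: bigmax_lt => // j _.
have jn := ltn_ord j; rewrite !iter_FG; apply/skew_ltP; split => /=.
  by apply/Dk/mkseq_eqP => i ik; apply: ab; lia.
have <- : mkseq a j = mkseq b j by apply/mkseq_eqP => i ij; apply: ab; lia.
apply: le_lt_trans dxy; rewrite -(take_mkseq a (ltnW jn)).
have jn' : (j < (size (mkseq a n)).+1)%N by rewrite size_mkseq ltnS ltnW.
exact: (le_bigmax _ _ (Ordinal jn')).
Qed.

Lemma b_n_setTX_le (K : set X) (e : R) k n : compact K -> 0 < e ->
  (forall a b : Sigma p, mkseq a k = mkseq b k -> Dseq a b < e) ->
  b_n g (setT `*` K) n e <= p%:R ^+ k * \sum_(w : n.-tuple 'I_p) b_d g K w e.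
Proof.
move=> cK e_gt0 Dk.
have /choice[F FP] : forall w : seq 'I_p,
    exists F, word_spanning g K w e F /\ b_d g K w e = (size F)%:R.
  move=> w; have [F FP bF] := @min_card_attained R _ _ (word_spanning_exists g_cont w cK e_gt0).
  by exists F.
(* The spanning set consists of the [(extend (w ++ v), y)], [y] in a minimal
   [(w, e)]-spanning set of [K] and [v] any word of length [k]; [extend] pads
   a word with the letter [0]. *)
pose extend (u : seq 'I_p) : Sigma p := nth (Ordinal p_gt0) u.
pose S := flatten [seq [seq (extend (tval w ++ tval v), y)
  | v <- enum {: k.-tuple 'I_p}, y <- F (tval w)] | w <- index_enum (n.-tuple 'I_p)].
have -> : p%:R ^+ k * \sum_(w : n.-tuple 'I_p) b_d g K w e = (size S)%:R.
  rewrite size_flatten sumnE !big_map natr_sum mulr_sumr; apply: eq_bigr => w _.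
  by rewrite size_allpairs natrM -cardE card_tuple card_ord natrX (proj2 (FP _)).
apply: min_card_le; split.
  move=> z /flatten_mapP[w _ /allpairsP[[v y] [_ /= yF ->]]].
  by split => //; exact: (proj1 (proj1 (FP _))) y yF.
case=> a x [_ Kx]; have [y [yF dxy]] := proj2 (proj1 (FP (mkseq a n))) x Kx.
have an : size (mkseq a n) == n by rewrite size_mkseq.
have ak : size (mkseq (fun i => a (n + i)%N) k) == k by rewrite size_mkseq.
exists (extend (mkseq a (n + k)), y); split.
  apply/flatten_mapP; exists (Tuple an); first exact: mem_index_enum.
  by apply/allpairsP; exists (Tuple ak, y); rewrite /= mem_enum -mkseqD.
apply: (bowen_lt_prefix Dk) dxy => //; apply/mkseq_eqP => i ik.
by rewrite /extend nth_mkseq.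
Qed.

End Counting.

Lemma ln_rate_le {R : realType} (b S c del : R) (n k : nat) :
  1 <= b -> 0 < S -> 0 < c -> b <= c ^+ k * S -> (0 < n)%N ->
  k%:R * ln c <= n%:R * del ->
  n%:R^-1 * ln b <= n%:R^-1 * ln (c ^- n * S) + (ln c + del).
Proof.
move=> b_ge1 S_gt0 c_gt0 bS n_gt0 kn.
have n_neq0 : n%:R != 0 :> R by rewrite pnatr_eq0 -lt0n.
have -> : ln c + del = n%:R^-1 * (n%:R * ln c + n%:R * del).
  by rewrite mulrDr !mulrA mulVf // !mul1r.
rewrite -mulrDr ler_wpM2l ?invr_ge0 //.
rewrite lnM ?posrE ?invr_gt0 ?exprn_gt0 // lnV ?posrE ?exprn_gt0 // lnXn //.
have b_gt0 : 0 < b := lt_le_trans ltr01 b_ge1.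
have : ln b <= ln (c ^+ k * S) by rewrite ler_ln ?posrE ?mulr_gt0 ?exprn_gt0.
rewrite lnM ?posrE ?exprn_gt0 // lnXn // -[ln c *+ n]mulr_natl -[ln c *+ k]mulr_natl.
move=> /le_trans; apply.
have -> : - (n%:R * ln c) + ln S + (n%:R * ln c + n%:R * del) = ln S + n%:R * del.
  by rewrite addrAC addKr addrC.
by rewrite addrC lerD2l.
Qed.

Section MainEstimate.
Context {R : realType} {p : nat} {X : metricType R} (g : 'I_p -> X -> X).
Hypothesis p_gt0 : (0 < p)%N.
Hypothesis g_cont : forall i, continuous (g i).

Lemma B_skew_setTX_le (K : set X) x (e : R) : compact K -> K x -> 0 < e ->
  (B_skew g (setT `*` K) e <= B_d g K e + (ln (p%:R : R))%:E)%E.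
Proof.
move=> cK Kx e_gt0; have [k Dk] := Dseq_lt_agree p_gt0 e_gt0.
apply/lee_addgt0Pr => del del_gt0; rewrite -addeA -EFinD.
apply: le_limn_esupD; exists (Num.truncn (k%:R * ln (p%:R : R) / del)).+1 => // n /= Nn.
rewrite lee_fin; apply: (ln_rate_le (k := k)).
- have Kz : (setT `*` K) ((fun=> Ordinal p_gt0) : Sigma p, x) by [].
  exact (b_n_ge1 p_gt0 g_cont n (dcompact_setTX p_gt0 cK) e_gt0 Kz).
- exact (sum_b_d_gt0 g_cont p_gt0 n cK e_gt0 Kx).
- by rewrite ltr0n.
- exact (b_n_setTX_le p_gt0 g_cont n cK e_gt0 Dk).
- exact: leq_trans Nn.
rewrite -ler_pdivrMr //; apply: le_trans (ltW (truncnS_gt _)) _.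
by rewrite ler_nat.
Qed.

Lemma h_skew_eps_le (w : Sigma p) x (e : R) : 0 < e ->
  (h_skew_eps g (w, x) e <= h_d_eps g x e + (ln (p%:R : R))%:E)%E.
Proof.
move=> e_gt0; rewrite -leeBlDr //; apply: le_ereal_inf_tmp => _ [K [cK xK] <-].
rewrite leeBlDr //; apply: le_trans (B_skew_setTX_le cK (nbhs_singleton xK) e_gt0).
apply: ereal_inf_lbound; exists (setT `*` K) => //.
by split; [exact: dcompact_setTX | exact: dnbhs_setTX].
Qed.

End MainEstimate.

Theorem mainTheorem9 (R : realType) (p : nat) (X : metricType R)
    (g : 'I_p -> X -> X) :
  (0 < p)%N ->
  compact [set: X] ->
  (forall i, continuous (g i)) ->
  forall x : X,
    (ereal_sup [set h_skew g (omega, x) | omega in [set: Sigma p]]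
      <= h_d g x + (ln (p%:R : R))%:E)%E.
Proof.
move=> p_gt0 _ g_cont x; apply: ge_ereal_sup => _ [w _ <-].
rewrite h_skewE // h_dE //; apply: ge_ereal_sup => _ [e e_pos <-].
have e_gt0 : 0 < e by move: e_pos; rewrite /= in_itv /= andbT.
apply: le_trans (h_skew_eps_le p_gt0 g_cont w x e_gt0) _.
by rewrite leeD2r //; apply: ereal_sup_ubound; exists e.
Qed.
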